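(* Assume the setting below with $\mu_+(1)\le1$, and suppose there is $\varepsilon\in(0,1]$ with $\kappa(s)<0$ for all $s\in(0,\varepsilon)$. Assume (A1), (A2), (A4), (A5), (A6), (A7), (A8), and in addition (i) $\phi'(1)+h'(1)=0$ and (ii) $\phi'(s)-h''(s^n)s^{2n-1}<0$ for all $s>1$. Then for every $\lambda\in(0,\varepsilon)$ there is no cavitating equilibrium solution with $r(1)=\lambda$.
   Context: Setting: $n\ge2$; $\kappa$ continuous on $[0,\infty)$, $\mu_+(\lambda)=\int_0^\lambda s\max\{\kappa(s),0\}ds$; $f$ solves $f''+\kappa f=0$, $f(0)=0$, $f'(0)=1$. $\Phi(v_1,\dots,v_n)=\sum_i\phi(v_i)+h(v_1\cdots v_n)$, $\tau(\rho)=f(r(\rho))/f(\rho)$, $T(\rho)=\tau^{n-1}\big[\phi'(r')+h'(r'\tau^{n-1})\tau^{n-1}\big]$. An equilibrium solution with $r(1)=\lambda$ is $r\in C^1(0,1]$, twice differentiable on $(0,1)$, $r'>0$ on $(0,1]$, $r(0):=\lim_{\rho\to0^+}r(\rho)\ge0$, $r(1)=\lambda$, satisfying on $(0,1)$ $$f(\rho)\big[\phi''(r')+h''(r'\tau^{n-1})\tau^{2(n-1)}\big]r''=(n-1)\big[f'(r)\phi'(\tau)-f'(\rho)\phi'(r')\big]-(n-1)\big(f'(r)r'-f'(\rho)\tau\big)h''(r'\tau^{n-1})\,r'\tau^{2n-3};$$ it is cavitating if $r(0)>0$ and $\lim_{\rho\to0^+}T(\rho)=0$. (A1) $h$ is $C^2$,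 strictly convex. (A2) $\lim_{v\to0^+}h(v)=\lim_{v\to\infty}h(v)/v=+\infty$. (A4) $\phi:(0,\infty)\to(0,\infty)$ $C^2$, convex. (A5) $v\phi'(v)$ increasing. (A6) there is $t_0\ge0$ with $\phi'(t_0)=0$; $q_1(s)=\sup_{v>t_0}\phi'(v)/\phi'(sv)$ ($s\ge1$), $q_0(s)=\inf_{v>t_0/s}\phi'(v)/\phi'(sv)$ ($s\in(0,1]$) satisfy $q_1\in C^1[1,\infty)$, $q_0\in C^1(0,1]$, $q_1(s)\to0$ ($s\to\infty$), $q_0(s)\to\infty$ ($s\to0^+$), $q_1'<0$, $q_0'<0$. (A7) there are $\delta_0,\delta_1>0$ with $|\phi'(sv)|\le\delta_1\phi(v)/v$ for all $v>0$ whenever $|s-1|<\delta_0$. (A8) $\phi(v)\le\delta_2(1+v^\alpha+v^{-\beta})$ for all $v>0$, $\delta_2>0$, $0<\alpha<n$, $0\le\beta<1+1/(n-1)$. *)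

From Stdlib Require Import Reals Lra.
Open Scope R_scope.

Definition deriv_within (D : R -> Prop) (F : R -> R) (x l : R) : Prop :=
  forall eps, 0 < eps -> exists delta, 0 < delta /\
    forall y, D y -> y <> x -> Rabs (y - x) < delta ->
      Rabs ((F y - F x) / (y - x) - l) < eps.

Definition cont_within (D : R -> Prop) (F : R -> R) (x : R) : Prop :=
  forall eps, 0 < eps -> exists delta, 0 < delta /\
    forall y, D y -> Rabs (y - x) < delta -> Rabs (F y - F x) < eps.

Definition nonneg_half (x : R) : Prop := 0 <= x.
Definition pos_half (x : R) : Prop := 0 < x.
Definition ge1_half (x : R) : Prop := 1 <= x.
Definition unit_lopen (x : R) : Prop := 0 < x <= 1.

Definition convex_pos (F : R -> R) : Prop :=
  forall x y t, 0 < x -> 0 < y -> 0 <= t <= 1 ->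
    F (t * x + (1 - t) * y) <= t * F x + (1 - t) * F y.
Definition strictly_convex_pos (F : R -> R) : Prop :=
  forall x y t, 0 < x -> 0 < y -> x <> y -> 0 < t < 1 ->
    F (t * x + (1 - t) * y) < t * F x + (1 - t) * F y.

Definition C2_pos (F F1 F2 : R -> R) : Prop :=
  (forall x, 0 < x -> derivable_pt_lim F x (F1 x)) /\
  (forall x, 0 < x -> derivable_pt_lim F1 x (F2 x)) /\
  (forall x, 0 < x -> continuity_pt F2 x).

Definition is_glb (E : R -> Prop) (m : R) : Prop :=
  (forall x, E x -> m <= x) /\ (forall b, (forall x, E x -> b <= x) -> b <= m).

(* mu_+(lambda) <= c, with mu_+(lambda) = int_0^lambda s max{kappa(s),0} ds. *)
Definition mu_plus_le (kappa : R -> R) (lam c : R) : Prop :=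
  forall pr : Riemann_integrable (fun s => s * Rmax (kappa s) 0) 0 lam,
    RiemannInt pr <= c.

Definition ode_solution (kappa f f1 : R -> R) : Prop :=
  (forall x, 0 <= x -> deriv_within nonneg_half f x (f1 x)) /\
  (forall x, 0 <= x -> deriv_within nonneg_half f1 x (- kappa x * f x)) /\
  f 0 = 0 /\ f1 0 = 1.

Definition A6 (phi1 : R -> R) : Prop :=
  exists t0 q1 q1d q0 q0d,
    0 <= t0 /\ phi1 t0 = 0 /\
    (forall s, 1 <= s ->
       is_lub (fun y => exists v, t0 < v /\ y = phi1 v / phi1 (s * v)) (q1 s)) /\
    (forall s, 0 < s <= 1 ->
       is_glb (fun y => exists v, t0 / s < v /\ y = phi1 v / phi1 (s * v)) (q0 s)) /\
    (forall s, 1 <= s -> deriv_within ge1_half q1 s (q1d s)) /\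
    (forall s, 1 <= s -> cont_within ge1_half q1d s) /\
    (forall s, 0 < s <= 1 -> deriv_within unit_lopen q0 s (q0d s)) /\
    (forall s, 0 < s <= 1 -> cont_within unit_lopen q0d s) /\
    (forall eps, 0 < eps -> exists S, forall s, S < s -> Rabs (q1 s) < eps) /\
    (forall M, exists d, 0 < d /\ forall s, 0 < s < d -> M < q0 s) /\
    (forall s, 1 <= s -> q1d s < 0) /\
    (forall s, 0 < s <= 1 -> q0d s < 0).

Definition tau (f r : R -> R) (rho : R) : R := f (r rho) / f rho.

Definition T_fun (n : nat) (f phi1 h1 r r1 : R -> R) (rho : R) : R :=
  let t := tau f r rho in
  t ^ (n - 1) * (phi1 (r1 rho) + h1 (r1 rho * t ^ (n - 1)) * t ^ (n - 1)).

(* r is an equilibrium solution with r(1) = lam, r' = r1, r'' = r2 on (0,1),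
   r(0) := lim_{rho->0+} r(rho) = r0. *)
Definition equilibrium (n : nat) (f f1 phi1 phi2 h2 : R -> R) (lam : R)
    (r r1 r2 : R -> R) (r0 : R) : Prop :=
  (forall rho, 0 < rho <= 1 -> deriv_within unit_lopen r rho (r1 rho)) /\
  (forall rho, 0 < rho <= 1 -> cont_within unit_lopen r1 rho) /\
  (forall rho, 0 < rho < 1 -> derivable_pt_lim r1 rho (r2 rho)) /\
  (forall rho, 0 < rho <= 1 -> 0 < r1 rho) /\
  (forall eps, 0 < eps -> exists d, 0 < d /\
     forall rho, 0 < rho < d -> Rabs (r rho - r0) < eps) /\
  0 <= r0 /\
  r 1 = lam /\
  (forall rho, 0 < rho < 1 ->
     let t := tau f r rho in
     let a := r1 rho * t ^ (n - 1) in
     f rho * (phi2 (r1 rho) + h2 a * t ^ (2 * (n - 1))) * r2 rho =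
       (INR n - 1) * (f1 (r rho) * phi1 t - f1 rho * phi1 (r1 rho))
       - (INR n - 1) * (f1 (r rho) * r1 rho - f1 rho * t) * h2 a
           * r1 rho * t ^ (2 * n - 3)).

Definition cavitating (n : nat) (f phi1 h1 r r1 : R -> R) (r0 : R) : Prop :=
  0 < r0 /\
  forall eps, 0 < eps -> exists d, 0 < d /\
    forall rho, 0 < rho < d -> Rabs (T_fun n f phi1 h1 r r1 rho) < eps.

From Stdlib Require Import Reals Lra Lia Classical.
Open Scope R_scope.

(* Suppose r is a cavitating equilibrium with r(1) = lambda.  Since r(0) > 0 and
   r(lambda) < lambda, the graph of r first meets the diagonal at some rs <= lambda,
   and t < r(t) on (0, rs).  As f is increasing there, tau = f(r)/f >= 1 on
   (0, rs], tau(rs) = 1, and tau blows up at 0.  Using hypothesis (ii), the ODE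
   forces w = r' - tau to cross each of its zeros downwards, while w > 0 near 0
   would make r' >= c/rho and drive r to -oo; hence r' < tau on (0, rs).  The
   reduced energy sigma = T / tau^(2(n-1)) then satisfies, by the ODE and (A5),
     f tau^(n-1) tau sigma' = (n-1) f'(r) (tau phi'(tau) - r' phi'(r')) >= 0,
   strictly where phi'(tau) > 0, i.e. near 0.  Cavitation gives sigma -> 0 at 0,
   whereas (i) and r'(rs) <= 1 give sigma(rs) <= 0: a contradiction. *)

Lemma below_both a b : 0 < a -> 0 < b -> exists h, 0 < h /\ h < a /\ h < b.
Proof.
  intros Ha Hb. exists (Rmin a b / 2).
  pose proof (Rmin_l a b). pose proof (Rmin_r a b).
  assert (0 < Rmin a b) by (apply Rmin_glb_lt; assumption). lra.
Qed.

Lemma derivable_cont F x l : derivable_pt_lim F x l -> forall e, 0 < e ->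
  exists d, 0 < d /\ forall y, Rabs (y - x) < d -> Rabs (F y - F x) < e.
Proof.
  intros Hd e He.
  destruct (derivable_continuous_pt F x (exist _ l Hd) e He) as [d [Hd0 Hc]].
  exists d; split; [exact Hd0|]. intros y Hy.
  destruct (Req_dec y x) as [->|Hne].
  - unfold Rminus; rewrite Rplus_opp_r, Rabs_R0; exact He.
  - apply (Hc y). repeat split; auto.
Qed.

Lemma sign_persists g x l : derivable_pt_lim g x l -> g x <> 0 ->
  exists d, 0 < d /\ forall y, Rabs (y - x) < d -> 0 < g x * g y.
Proof.
  intros Hd Hne.
  destruct (derivable_cont g x l Hd (Rabs (g x))) as [d [Hd0 Hc]];
    [apply Rabs_pos_lt; exact Hne|].
  exists d; split; [exact Hd0|]. intros y Hy.
  destruct (Rabs_def2 _ _ (Hc y Hy)) as [Hc1 Hc2].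
  destruct (Rlt_or_le (g x) 0) as [Hn|Hp].
  - rewrite (Rabs_left (g x)) in Hc1, Hc2 by lra. nra.
  - rewrite (Rabs_pos_eq (g x)) in Hc1, Hc2 by lra.
    assert (0 < g x) by (destruct Hp; [lra | congruence]). nra.
Qed.

Lemma deriv_within_cont D F x l : deriv_within D F x l -> forall e, 0 < e ->
  exists d, 0 < d /\ forall y, D y -> Rabs (y - x) < d -> Rabs (F y - F x) < e.
Proof.
  intros H e He. destruct (H 1 Rlt_0_1) as [del [Hdel Hd]].
  set (K := Rabs l + 1).
  assert (HK : 0 < K) by (unfold K; pose proof (Rabs_pos l); lra).
  destruct (below_both del (e / K) Hdel ltac:(apply Rdiv_lt_0_compat; lra)) as [d Hd0].
  exists d. split; [lra|]. intros y Dy Hy.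
  destruct (Req_dec y x) as [->|Hne].
  { unfold Rminus; rewrite Rplus_opp_r, Rabs_R0; exact He. }
  specialize (Hd y Dy Hne ltac:(lra)).
  set (q := (F y - F x) / (y - x)) in Hd.
  assert (Hq : Rabs q < K).
  { pose proof (Rabs_triang (q - l) l) as Htr. replace (q - l + l) with q in Htr by ring.
    unfold K. lra. }
  assert (Hyx : Rabs (y - x) * K < e).
  { assert (Hy' : Rabs (y - x) < e / K) by lra.
    apply (Rmult_lt_compat_r K) in Hy'; [|exact HK].
    unfold Rdiv in Hy'. rewrite Rmult_assoc, Rinv_l, Rmult_1_r in Hy' by lra. exact Hy'. }
  replace (F y - F x) with (q * (y - x)) by (unfold q; field; lra).
  rewrite Rabs_mult. pose proof (Rabs_pos (y - x)). pose proof (Rabs_pos q). nra.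
Qed.

Lemma deriv_within_interior D F a b x l : a < x < b -> (forall y, a < y < b -> D y) ->
  deriv_within D F x l -> derivable_pt_lim F x l.
Proof.
  intros Hx HD H eps Heps. destruct (H eps Heps) as [del [Hdel Hd]].
  destruct (below_both (x - a) (b - x) ltac:(lra) ltac:(lra)) as [c Hc].
  destruct (below_both del c Hdel ltac:(lra)) as [rad Hr].
  exists (mkposreal rad (proj1 Hr)). intros h Hh Hhd. simpl in Hhd.
  apply Rabs_def2 in Hhd as Hbd.
  specialize (Hd (x + h)). replace (x + h - x) with h in Hd by ring.
  apply Hd; [apply HD | | ]; lra.
Qed.

Lemma nondecreasing_of_deriv F F' a b : a < b ->
  (forall c, a <= c <= b -> derivable_pt_lim F c (F' c)) ->
  (forall c, a < c < b -> 0 <= F' c) -> F a <= F b.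
Proof.
  intros Hab Hd Hs. destruct (MVT_cor2 F F' a b Hab Hd) as [c [Ec Hc]].
  specialize (Hs c Hc). nra.
Qed.

Lemma increasing_of_deriv F F' a b : a < b ->
  (forall c, a <= c <= b -> derivable_pt_lim F c (F' c)) ->
  (forall c, a < c < b -> 0 < F' c) -> F a < F b.
Proof.
  intros Hab Hd Hs. destruct (MVT_cor2 F F' a b Hab Hd) as [c [Ec Hc]].
  specialize (Hs c Hc). nra.
Qed.

Lemma crossing_downward w x l : derivable_pt_lim w x l -> l < 0 -> w x = 0 ->
  exists d, 0 < d /\ forall h, 0 < h < d -> w (x + h) < 0 /\ 0 < w (x - h).
Proof.
  intros Hd Hl H0. destruct (Hd (- l / 2)) as [[del Hdel] Hq]; [lra|]. simpl in Hq.
  exists del. split; [exact Hdel|]. intros h Hh.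
  assert (Hquot : forall k, k <> 0 -> Rabs k < del -> (w (x + k) / k) < l / 2).
  { intros k Hk Hkd. specialize (Hq k Hk Hkd). rewrite H0, Rminus_0_r in Hq.
    apply Rabs_def2 in Hq. lra. }
  split.
  - pose proof (Hquot h ltac:(lra) ltac:(rewrite Rabs_pos_eq; lra)) as Hw.
    replace (w (x + h)) with (w (x + h) / h * h) by (field; lra). nra.
  - pose proof (Hquot (- h) ltac:(lra) ltac:(rewrite Rabs_Ropp, Rabs_pos_eq; lra)) as Hw.
    replace (x - h) with (x + - h) by ring.
    replace (w (x + - h)) with (w (x + - h) / - h * - h) by (field; lra). nra.
Qed.

Lemma deriv_nonpos_at_zero_from_left g x l : derivable_pt_lim g x l -> g x = 0 ->
  0 < x -> (forall y, 0 < y < x -> 0 < g y) -> l <= 0.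
Proof.
  intros Hd H0 Hx Hpos. destruct (Rle_or_lt l 0) as [|Hl]; [assumption|]. exfalso.
  assert (Hd' : derivable_pt_lim (fun y => - g y) x (- l)) by
    (apply (derivable_pt_lim_opp g); exact Hd).
  destruct (crossing_downward _ x _ Hd' ltac:(lra) ltac:(cbv beta; rewrite H0; ring)) as [d [Hd0 Hs]].
  destruct (below_both d x Hd0 Hx) as [h Hh].
  destruct (Hs h ltac:(lra)) as [_ Hleft]. pose proof (Hpos (x - h) ltac:(lra)). lra.
Qed.

Definition vanishes_at_0 (G : R -> R) : Prop :=
  forall e, 0 < e -> exists d, 0 < d /\ forall y, 0 < y < d -> Rabs (G y) < e.

Lemma vanishes_id : vanishes_at_0 (fun y => y).
Proof.
  intros e He. exists e. split; [exact He|]. intros y Hy. rewrite Rabs_pos_eq; lra.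
Qed.

Lemma vanishes_comb a b G H K : (forall y, K y = a * G y + b * H y) ->
  vanishes_at_0 G -> vanishes_at_0 H -> vanishes_at_0 K.
Proof.
  intros HK HG HH e He.
  set (C := Rabs a + Rabs b + 1).
  assert (HC : 0 < C) by (unfold C; pose proof (Rabs_pos a); pose proof (Rabs_pos b); lra).
  destruct (HG (e / C)) as [d1 [Hd1 H1]]; [apply Rdiv_lt_0_compat; lra|].
  destruct (HH (e / C)) as [d2 [Hd2 H2]]; [apply Rdiv_lt_0_compat; lra|].
  destruct (below_both d1 d2 Hd1 Hd2) as [d Hd].
  exists d. split; [lra|]. intros y Hy.
  specialize (H1 y ltac:(lra)). specialize (H2 y ltac:(lra)).
  assert (HeC : C * (e / C) = e) by (field; lra).
  assert (Hq : 0 < e / C) by (apply Rdiv_lt_0_compat; lra).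
  set (q := e / C) in *.
  rewrite HK. eapply Rle_lt_trans; [apply Rabs_triang|]. rewrite !Rabs_mult.
  assert (Rabs a * Rabs (G y) <= Rabs a * q) by (apply Rmult_le_compat_l; [apply Rabs_pos | lra]).
  assert (Rabs b * Rabs (H y) <= Rabs b * q) by (apply Rmult_le_compat_l; [apply Rabs_pos | lra]).
  unfold C in HeC. lra.
Qed.

Lemma nonneg_of_nondecreasing_from_0 G G' x : 0 < x ->
  (forall c, 0 < c <= x -> derivable_pt_lim G c (G' c)) ->
  (forall c, 0 < c < x -> 0 <= G' c) -> vanishes_at_0 G -> 0 <= G x.
Proof.
  intros Hx Hd Hpos Hvan. apply Rnot_lt_le. intros Hlt.
  destruct (Hvan (- G x)) as [d [Hd0 Hsmall]]; [lra|].
  destruct (below_both d x Hd0 Hx) as [a Ha].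
  assert (Hmono : G a <= G x).
  { apply (nondecreasing_of_deriv G G'); [lra | |].
    - intros c Hc. apply Hd. lra.
    - intros c Hc. apply Hpos. lra. }
  specialize (Hsmall a ltac:(lra)). apply Rabs_def2 in Hsmall. lra.
Qed.

(* The first zero of a function positive near 0: if g(x) <= 0, there is z <= x
   with g(z) = 0 and g > 0 on (0, z).  Proved by taking the supremum of the
   initial intervals of positivity. *)
Lemma first_zero g g' b x :
  (forall y, 0 < y < b -> derivable_pt_lim g y (g' y)) ->
  (exists c, 0 < c < b /\ forall t, 0 < t <= c -> 0 < g t) ->
  0 < x < b -> g x <= 0 ->
  exists z, 0 < z <= x /\ g z = 0 /\ forall t, 0 < t < z -> 0 < g t.
Proof.
  intros Hd [c [Hc Hpos]] Hx Hgx.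
  set (S := fun y => 0 < y <= x /\ forall t, 0 < t <= y -> 0 < g t).
  assert (Hcx : c < x).
  { destruct (Rlt_or_le c x) as [|Hle]; [assumption|]. specialize (Hpos x ltac:(lra)). lra. }
  assert (HSc : S c) by (split; [lra | exact Hpos]).
  destruct (completeness S) as [z [Hub Hlub]].
  { exists x. intros y Hy. apply Hy. }
  { exists c. exact HSc. }
  assert (Hcz : c <= z) by (apply Hub; exact HSc).
  assert (Hzx : z <= x) by (apply Hlub; intros y Hy; apply Hy).
  assert (Hbelow : forall t, 0 < t < z -> 0 < g t).
  { intros t Ht. apply NNPP; intros Hn.
    assert (Hubt : is_upper_bound S t).
    { intros y [Hy Hyp]. destruct (Rle_or_lt y t) as [|Hty]; [assumption|].
      exfalso. apply Hn. apply Hyp. lra. }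
    specialize (Hlub t Hubt). lra. }
  exists z. split; [lra|]. split; [|exact Hbelow].
  apply NNPP; intros Hne.
  destruct (sign_persists g z (g' z) (Hd z ltac:(lra)) Hne) as [d [Hd0 Hsg]].
  destruct (Rlt_or_le (g z) 0) as [Hneg|Hnn].
  - destruct (below_both d z Hd0 ltac:(lra)) as [h Hh].
    specialize (Hsg (z - h) ltac:(apply Rabs_def1; lra)).
    specialize (Hbelow (z - h) ltac:(lra)). nra.
  - assert (Hzpos : 0 < g z) by (destruct Hnn; [lra | congruence]).
    assert (Hzx' : z < x) by (destruct Hzx as [Hlt | Heq]; [exact Hlt | subst z; lra]).
    destruct (below_both d (x - z) Hd0 ltac:(lra)) as [h Hh].
    assert (HSy : S (z + h)).
    { split; [lra|]. intros t Ht. destruct (Rlt_or_le t z) as [Htz|Hzt].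
      - apply Hbelow; lra.
      - specialize (Hsg t ltac:(apply Rabs_def1; lra)). nra. }
    specialize (Hub (z + h) HSy). lra.
Qed.

Lemma last_zero_before w w' b y p :
  (forall x, 0 < x < b -> derivable_pt_lim w x (w' x)) ->
  0 < y < p -> p < b -> w y <= 0 -> 0 < w p ->
  exists m, y <= m < p /\ w m = 0 /\ forall t, m < t <= p -> 0 < w t.
Proof.
  intros Hd Hyp Hpb Hwy Hwp.
  assert (Hgd : forall t, 0 < t < p ->
    derivable_pt_lim (fun t => w (p - t)) t (w' (p - t) * (0 - 1))).
  { intros t Ht. apply (derivable_pt_lim_comp (fun t => p - t) w).
    - apply derivable_pt_lim_minus; [apply derivable_pt_lim_const | apply derivable_pt_lim_id].
    - apply Hd; lra. }
  assert (Hgpos : exists c, 0 < c < p /\ forall t, 0 < t <= c -> 0 < w (p - t)).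
  { destruct (sign_persists w p _ (Hd p ltac:(lra)) ltac:(lra)) as [d [Hd0 Hs]].
    destruct (below_both d p Hd0 ltac:(lra)) as [c Hc].
    exists c. split; [lra|]. intros t Ht.
    specialize (Hs (p - t) ltac:(apply Rabs_def1; lra)). nra. }
  destruct (first_zero (fun t => w (p - t)) _ p (p - y) Hgd Hgpos ltac:(lra)
              ltac:(cbv beta; replace (p - (p - y)) with y by ring; exact Hwy))
    as [z [Hz0 [Hwz Hpos]]].
  cbv beta in Hwz, Hpos.
  exists (p - z). split; [lra|]. split; [exact Hwz|]. intros t Ht.
  destruct (Req_dec t p) as [->|Hne]; [exact Hwp|].
  specialize (Hpos (p - t) ltac:(lra)). replace (p - (p - t)) with t in Hpos by ring.
  exact Hpos.
Qed.

(* A function crossing each of its zeros downwards and not positive on any initial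
   interval (0, c] is negative on (0, b): otherwise its last zero before a
   positive value would be crossed upwards. *)
Lemma negative_of_downward_zeros w w' b :
  (forall x, 0 < x < b -> derivable_pt_lim w x (w' x)) ->
  (forall x, 0 < x < b -> w x = 0 -> w' x < 0) ->
  ~ (exists c, 0 < c < b /\ forall x, 0 < x <= c -> 0 < w x) ->
  forall x, 0 < x < b -> w x < 0.
Proof.
  intros Hd Hz Hno x Hx.
  destruct (Rlt_or_le (w x) 0) as [|Hge]; [assumption|]. exfalso.
  assert (Hp : exists p, 0 < p <= x /\ 0 < w p).
  { destruct (Req_dec (w x) 0) as [H0|H0].
    - destruct (crossing_downward w x _ (Hd x Hx) (Hz x Hx H0) H0) as [d [Hd0 Hs]].
      destruct (below_both d x Hd0 ltac:(lra)) as [h Hh].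
      exists (x - h). split; [lra|]. apply Hs. lra.
    - exists x. split; lra. }
  destruct Hp as [p [Hp Hwp]].
  assert (Hy : exists y, 0 < y <= p /\ w y <= 0).
  { apply NNPP; intros Hn. apply Hno. exists p. split; [lra|]. intros t Ht.
    apply Rnot_le_lt; intros Hle. apply Hn. exists t. split; assumption. }
  destruct Hy as [y [Hy Hwy]].
  assert (Hyp : y < p) by (destruct (proj2 Hy) as [|Heq]; [assumption | subst y; lra]).
  destruct (last_zero_before w w' b y p Hd ltac:(lra) ltac:(lra) Hwy Hwp)
    as [m [Hm [Hwm Hpos]]].
  destruct (crossing_downward w m _ (Hd m ltac:(lra)) (Hz m ltac:(lra) Hwm) Hwm)
    as [d [Hd0 Hs]].
  destruct (below_both d (p - m) Hd0 ltac:(lra)) as [h Hh].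
  destruct (Hs h ltac:(lra)) as [Hright _]. specialize (Hpos (m + h) ltac:(lra)). lra.
Qed.

(* A function whose derivative exceeds k/x near 0 (k > 0) behaves like k ln x and
   cannot stay bounded below. *)
Lemma no_log_blowup (r r1 : R -> R) (k c r0 : R) : 0 < c -> 0 < k ->
  (forall x, 0 < x <= c -> derivable_pt_lim r x (r1 x)) ->
  (forall x, 0 < x <= c -> k / x < r1 x) ->
  ~ (forall x, 0 < x <= c -> r0 <= r x).
Proof.
  intros Hc Hk Hd Hb Hge.
  set (x := exp (ln c - (r c - r0) / k - 1)).
  assert (Hrc : 0 <= (r c - r0) / k) by
    (apply Rmult_le_pos; [pose proof (Hge c ltac:(lra)); lra | left; apply Rinv_0_lt_compat; lra]).
  assert (Hx0 : 0 < x) by apply exp_pos.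
  assert (Hxc : x < c).
  { rewrite <- (exp_ln c) by lra. apply exp_increasing. lra. }
  assert (Hlog : r x - k * ln x <= r c - k * ln c).
  { apply (nondecreasing_of_deriv (fun z => r z - k * ln z) (fun z => r1 z - k * / z));
      [exact Hxc | |].
    - intros z Hz. apply derivable_pt_lim_minus; [apply Hd; lra|].
      replace (k * / z) with (0 * ln z + k * / z) by ring.
      apply (derivable_pt_lim_mult (fct_cte k) ln);
        [apply derivable_pt_lim_const | apply derivable_pt_lim_ln; lra].
    - intros z Hz. specialize (Hb z ltac:(lra)). unfold Rdiv in Hb. lra. }
  unfold x in Hlog at 2. rewrite ln_exp in Hlog.
  replace (k * (ln c - (r c - r0) / k - 1)) with (k * ln c - (r c - r0) - k) in Hlog
    by (field; lra).
  pose proof (Hge x ltac:(lra)). lra.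
Qed.

Lemma convex_deriv_le_slope F F1 x y : convex_pos F -> derivable_pt_lim F x (F1 x) ->
  0 < x < y -> F1 x <= (F y - F x) / (y - x).
Proof.
  intros Hc Hd Hxy. set (sl := (F y - F x) / (y - x)).
  destruct (Rle_or_lt (F1 x) sl) as [|Hlt]; [assumption|]. exfalso.
  destruct (Hd (F1 x - sl)) as [[del Hdel] Hq]; [lra|]. simpl in Hq.
  destruct (below_both del (y - x) Hdel ltac:(lra)) as [h Hh].
  specialize (Hq h ltac:(lra) ltac:(rewrite Rabs_pos_eq; lra)).
  set (t := h / (y - x)).
  assert (Ht : 0 <= t <= 1).
  { unfold t; split; [apply Rlt_le, Rdiv_lt_0_compat; lra|].
    apply (Rmult_le_reg_r (y - x)); [lra|]. unfold Rdiv.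
    rewrite Rmult_assoc, Rinv_l by lra. lra. }
  specialize (Hc y x t ltac:(lra) ltac:(lra) Ht).
  replace (t * y + (1 - t) * x) with (x + h) in Hc by (unfold t; field; lra).
  assert (Hsl : F y - F x = sl * (y - x)) by (unfold sl; field; lra).
  set (q := (F (x + h) - F x) / h) in Hq.
  assert (Eq : F (x + h) - F x = q * h) by (unfold q; field; lra).
  assert (Et : t * (y - x) = h) by (unfold t; field; lra).
  assert (q * h <= sl * h) by nra.
  apply Rabs_def2 in Hq. nra.
Qed.

Lemma convex_slope_le_deriv F F1 x y : convex_pos F -> derivable_pt_lim F y (F1 y) ->
  0 < x < y -> (F y - F x) / (y - x) <= F1 y.
Proof.
  intros Hc Hd Hxy. set (sl := (F y - F x) / (y - x)).
  destruct (Rle_or_lt sl (F1 y)) as [|Hlt]; [assumption|]. exfalso.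
  destruct (Hd (sl - F1 y)) as [[del Hdel] Hq]; [lra|]. simpl in Hq.
  destruct (below_both del (y - x) Hdel ltac:(lra)) as [k Hk].
  specialize (Hq (- k) ltac:(lra) ltac:(rewrite Rabs_Ropp, Rabs_pos_eq; lra)).
  set (t := k / (y - x)).
  assert (Ht : 0 <= t <= 1).
  { unfold t; split; [apply Rlt_le, Rdiv_lt_0_compat; lra|].
    apply (Rmult_le_reg_r (y - x)); [lra|]. unfold Rdiv.
    rewrite Rmult_assoc, Rinv_l by lra. lra. }
  specialize (Hc x y t ltac:(lra) ltac:(lra) Ht).
  replace (t * x + (1 - t) * y) with (y + - k) in Hc by (unfold t; field; lra).
  assert (Hsl : F y - F x = sl * (y - x)) by (unfold sl; field; lra).
  set (q := (F (y + - k) - F y) / - k) in Hq.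
  assert (Eq : F (y + - k) - F y = q * (- k)) by (unfold q; field; lra).
  assert (Et : t * (y - x) = k) by (unfold t; field; lra).
  assert (- (q * k) <= - (sl * k)) by nra.
  apply Rabs_def2 in Hq. nra.
Qed.

Lemma convex_deriv_nondecreasing F F1 : convex_pos F ->
  (forall x, 0 < x -> derivable_pt_lim F x (F1 x)) ->
  forall x y, 0 < x -> x <= y -> F1 x <= F1 y.
Proof.
  intros Hc Hd x y Hx Hxy. destruct (Req_dec x y) as [->|Hne]; [lra|].
  pose proof (convex_deriv_le_slope F F1 x y Hc (Hd x Hx) ltac:(lra)).
  pose proof (convex_slope_le_deriv F F1 x y Hc (Hd y ltac:(lra)) ltac:(lra)). lra.
Qed.

Lemma strictly_convex_convex F : strictly_convex_pos F -> convex_pos F.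
Proof.
  intros Hs x y t Hx Hy Ht.
  destruct (Req_dec x y) as [->|Hne].
  { replace (t * y + (1 - t) * y) with y by ring. lra. }
  destruct (Req_dec t 0) as [->|Ht0].
  { replace (0 * x + (1 - 0) * y) with y by ring. lra. }
  destruct (Req_dec t 1) as [->|Ht1].
  { replace (1 * x + (1 - 1) * y) with x by ring. lra. }
  apply Rlt_le, Hs; auto; lra.
Qed.

Lemma deriv_nonneg_of_nondecreasing G x l : 0 < x ->
  (forall u v, 0 < u -> u <= v -> G u <= G v) -> derivable_pt_lim G x l -> 0 <= l.
Proof.
  intros Hx Hm Hd. destruct (Rle_or_lt 0 l) as [|Hl]; [assumption|]. exfalso.
  destruct (Hd (- l)) as [[del Hdel] Hq]; [lra|]. simpl in Hq.
  specialize (Hq (del / 2) ltac:(lra) ltac:(rewrite Rabs_pos_eq; lra)).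
  assert (G x <= G (x + del / 2)) by (apply Hm; lra).
  assert (0 <= (G (x + del / 2) - G x) / (del / 2)) by
    (apply Rmult_le_pos; [lra | apply Rlt_le, Rinv_0_lt_compat; lra]).
  apply Rabs_def2 in Hq. lra.
Qed.

Lemma decreasing_to_zero_pos q q' :
  (forall s, 1 < s -> derivable_pt_lim q s (q' s)) -> (forall s, 1 < s -> q' s < 0) ->
  (forall e, 0 < e -> exists S, forall s, S < s -> Rabs (q s) < e) ->
  forall s, 1 < s -> 0 < q s.
Proof.
  intros Hd Hneg Hlim s Hs.
  assert (Hdec : forall a b, 1 < a -> a < b -> q b < q a).
  { intros a b Ha Hab.
    pose proof (increasing_of_deriv (fun x => - q x) (fun x => - q' x) a b Hab) as H.
    cbv beta in H. enough (- q a < - q b) by lra. apply H.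
    - intros c Hc. apply derivable_pt_lim_opp. apply Hd; lra.
    - intros c Hc. pose proof (Hneg c ltac:(lra)). lra. }
  pose proof (Hdec s (s + 1) Hs ltac:(lra)) as Hs1.
  apply NNPP; intros Hnp.
  destruct (Hlim (- q (s + 1))) as [S HS]; [lra|].
  set (s2 := Rmax S (s + 1) + 1).
  pose proof (Rmax_l S (s + 1)). pose proof (Rmax_r S (s + 1)).
  specialize (HS s2 ltac:(unfold s2; lra)).
  pose proof (Hdec (s + 1) s2 ltac:(lra) ltac:(unfold s2; lra)).
  apply Rabs_def2 in HS. lra.
Qed.

(* If phi' <= 0 everywhere and is nondecreasing, each ratio phi'(v)/phi'(sv) with
   s >= 1 is 0 or >= 1, so the supremum in (A6) never lies in (0, 1). *)
Lemma ratio_sup_not_in_unit phi1 t0 s M : 0 <= t0 -> 1 <= s ->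
  (forall x y, 0 < x -> x <= y -> phi1 x <= phi1 y) -> (forall v, 0 < v -> phi1 v <= 0) ->
  is_lub (fun y => exists v, t0 < v /\ y = phi1 v / phi1 (s * v)) M ->
  M <= 0 \/ 1 <= M.
Proof.
  intros Ht0 Hs Hmono Hnonpos [Hub Hlub].
  destruct (classic (exists v, t0 < v /\ 0 < phi1 v / phi1 (s * v))) as [[v [Hv Hy]]|Hn].
  - right. apply Rle_trans with (phi1 v / phi1 (s * v)); [| apply Hub; exists v; auto].
    pose proof (Hmono v (s * v) ltac:(lra) ltac:(nra)).
    pose proof (Hnonpos (s * v) ltac:(nra)).
    destruct (Req_dec (phi1 (s * v)) 0) as [Hz|Hz].
    + rewrite Hz in Hy. unfold Rdiv in Hy. rewrite Rinv_0, Rmult_0_r in Hy. lra.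
    + apply (Rmult_le_reg_r (- phi1 (s * v))); [lra|].
      replace (phi1 v / phi1 (s * v) * - phi1 (s * v)) with (- phi1 v) by (field; exact Hz).
      lra.
  - left. apply Hlub. intros y [v [Hv ->]].
    apply Rnot_lt_le. intros Hy. apply Hn. exists v. auto.
Qed.

(* (A6) forces phi' to be eventually positive: q1 is positive and tends to 0, so it
   takes values in (0, 1), which is impossible if phi' <= 0. *)
Lemma A6_eventually_pos phi1 : (forall x y, 0 < x -> x <= y -> phi1 x <= phi1 y) ->
  A6 phi1 -> exists V, 0 < V /\ forall v, V <= v -> 0 < phi1 v.
Proof.
  intros Hmono HA.
  destruct (classic (exists V, 0 < V /\ 0 < phi1 V)) as [[V [HV HpV]]|Hn].
  { exists V. split; [exact HV|]. intros v Hv. pose proof (Hmono V v HV Hv). lra. }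
  exfalso.
  assert (Hnonpos : forall v, 0 < v -> phi1 v <= 0).
  { intros v Hv. apply Rnot_lt_le. intros Hp. apply Hn. exists v. auto. }
  destruct HA as [t0 [q1 [q1d [q0 [q0d
    [Ht0 [_ [Hlub1 [_ [Hd1 [_ [_ [_ [Hlim1 [_ [Hneg1 _]]]]]]]]]]]]]]]].
  assert (Hq1pos : forall s, 1 < s -> 0 < q1 s).
  { apply (decreasing_to_zero_pos q1 q1d); [|intros s Hs; apply Hneg1; lra | exact Hlim1].
    intros s Hs. apply (deriv_within_interior ge1_half q1 1 (s + 1)); [lra | | apply Hd1; lra].
    intros y Hy. unfold ge1_half. lra. }
  destruct (Hlim1 1 Rlt_0_1) as [S HS].
  set (s := Rmax S 1 + 1).
  pose proof (Rmax_l S 1). pose proof (Rmax_r S 1).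
  specialize (HS s ltac:(unfold s; lra)). apply Rabs_def2 in HS.
  specialize (Hq1pos s ltac:(unfold s; lra)).
  destruct (ratio_sup_not_in_unit phi1 t0 s (q1 s) Ht0 ltac:(unfold s; lra) Hmono Hnonpos
    (Hlub1 s ltac:(unfold s; lra))); lra.
Qed.

Lemma pow_deriv_ratio T N x dT : derivable_pt_lim T x dT -> T x <> 0 ->
  derivable_pt_lim (fun y => T y ^ N) x (INR N * T x ^ N / T x * dT).
Proof.
  intros HT Hne.
  pose proof (derivable_pt_lim_comp T (fun y => y ^ N) x _ _ HT
                (derivable_pt_lim_pow (T x) N)) as H.
  replace (INR N * T x ^ N / T x * dT) with (INR N * T x ^ Nat.pred N * dT);
    [exact H|].
  destruct N as [|N]; cbn [Nat.pred pow INR]; [unfold Rdiv; ring | field; exact Hne].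
Qed.

Lemma tau_deriv f f1 r r1 x : derivable_pt_lim f x (f1 x) ->
  derivable_pt_lim f (r x) (f1 (r x)) -> derivable_pt_lim r x (r1 x) -> f x <> 0 ->
  derivable_pt_lim (tau f r) x ((f1 (r x) * r1 x - f1 x * tau f r x) / f x).
Proof.
  intros Hf Hfr Hr Hne.
  pose proof (derivable_pt_lim_div (comp f r) f x _ _
                (derivable_pt_lim_comp r f x _ _ Hr Hfr) Hf Hne) as Hd.
  replace ((f1 (r x) * r1 x - f1 x * tau f r x) / f x)
    with ((f1 (r x) * r1 x * f x - f1 x * comp f r x) / Rsqr (f x));
    [exact Hd | unfold comp, tau, Rsqr; field; exact Hne].
Qed.

Lemma reduced_T_deriv (P1 P2 H1 H2 R1 R2 T : R -> R) N x dT :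
  derivable_pt_lim T x dT -> derivable_pt_lim R1 x (R2 x) ->
  derivable_pt_lim P1 (R1 x) (P2 (R1 x)) ->
  derivable_pt_lim H1 (R1 x * T x ^ N) (H2 (R1 x * T x ^ N)) -> T x <> 0 ->
  derivable_pt_lim (fun y => P1 (R1 y) / T y ^ N + H1 (R1 y * T y ^ N)) x
    (let p := T x ^ N in let dp := INR N * p / T x * dT in
     (P2 (R1 x) * R2 x * p - P1 (R1 x) * dp) / (p * p) + H2 (R1 x * p) * (R2 x * p + R1 x * dp)).
Proof.
  intros HT HR HP HH Hne.
  assert (Hp : T x ^ N <> 0) by (apply pow_nonzero; exact Hne).
  pose proof (pow_deriv_ratio T N x dT HT Hne) as HE.
  pose proof (derivable_pt_lim_div _ _ x _ _ (derivable_pt_lim_comp R1 P1 x _ _ HR HP) HE Hp)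
    as Hquot.
  pose proof (derivable_pt_lim_comp _ H1 x _ _ (derivable_pt_lim_mult _ _ x _ _ HR HE) HH)
    as Hcomp.
  pose proof (derivable_pt_lim_plus _ _ x _ _ Hquot Hcomp) as Hsum.
  unfold comp, div_fct, mult_fct, plus_fct in Hsum. cbv zeta.
  match type of Hsum with derivable_pt_lim _ _ ?l => replace (_ + _) with l end;
    [exact Hsum | unfold Rsqr; field; auto].
Qed.

(* The key algebraic identity: substituting the equilibrium equation, the
   derivative of the reduced energy collapses to  k f'(r) (t phi'(t) - r' phi'(r'))
   divided by  f t^(n-1) t. *)
Lemma reduced_T_deriv_identity F t p k f1r f1x p1r p1t p2 h2a r1 r2 :
  F <> 0 -> t <> 0 -> p <> 0 ->
  F * (p2 + h2a * (p * p)) * r2 =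
    k * (f1r * p1t - f1x * p1r) - k * (f1r * r1 - f1x * t) * h2a * r1 * (p * p / t) ->
  let dp := k * p / t * ((f1r * r1 - f1x * t) / F) in
  (p2 * r2 * p - p1r * dp) / (p * p) + h2a * (r2 * p + r1 * dp) =
    k * f1r * (t * p1t - r1 * p1r) / (F * p * t).
Proof.
  intros HF Ht Hp Hode dp. unfold dp.
  set (L := F * (p2 + h2a * (p * p)) * r2) in Hode.
  set (A := f1r * r1 - f1x * t).
  transitivity ((t * L + k * h2a * r1 * (p * p) * A - k * p1r * A) / (F * p * t));
    [unfold L; field; auto|].
  rewrite Hode. unfold A. field. auto.
Qed.

Lemma pow_exponents t n : (2 <= n)%nat -> t <> 0 ->
  t ^ (2 * (n - 1)) = t ^ (n - 1) * t ^ (n - 1) /\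
  t ^ (2 * n - 3) = t ^ (n - 1) * t ^ (n - 1) / t /\
  t ^ n = t ^ (n - 1) * t /\
  t ^ (2 * n - 1) = t ^ (n - 1) * t ^ (n - 1) * t.
Proof.
  intros Hn Ht. destruct n as [|[|m]]; [lia | lia|].
  replace (S (S m) - 1)%nat with (S m) by lia.
  replace (2 * S m)%nat with (S m + S m)%nat by lia.
  replace (2 * S (S m) - 3)%nat with (S (m + m)) by lia.
  replace (2 * S (S m) - 1)%nat with (S (S (S (m + m)))) by lia.
  rewrite pow_add, <- !tech_pow_Rmult, !pow_add.
  split; [reflexivity|]. split; [field; exact Ht|]. split; ring.
Qed.

Section NegativeCurvature.

Variables (kappa f f1 : R -> R) (eps : R).
Hypothesis Hode : ode_solution kappa f f1.
Hypothesis Heps : 0 < eps.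
Hypothesis Hkappa : forall s, 0 < s < eps -> kappa s < 0.

Lemma f_deriv x : 0 < x -> derivable_pt_lim f x (f1 x).
Proof.
  intros Hx. destruct Hode as [Hf _].
  apply (deriv_within_interior nonneg_half f 0 (x + 1)); [lra | | apply Hf; lra].
  intros y Hy. unfold nonneg_half. lra.
Qed.

Lemma f1_deriv x : 0 < x -> derivable_pt_lim f1 x (- kappa x * f x).
Proof.
  intros Hx. destruct Hode as [_ [Hf1 _]].
  apply (deriv_within_interior nonneg_half f1 0 (x + 1)); [lra | | apply Hf1; lra].
  intros y Hy. unfold nonneg_half. lra.
Qed.

Lemma f_vanishes : vanishes_at_0 f.
Proof.
  intros e He. destruct Hode as [Hf [_ [H0 _]]].
  destruct (deriv_within_cont _ _ _ _ (Hf 0 (Rle_refl 0)) e He) as [d [Hd Hc]].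
  exists d. split; [exact Hd|]. intros y Hy.
  specialize (Hc y ltac:(unfold nonneg_half; lra) ltac:(rewrite Rminus_0_r, Rabs_pos_eq; lra)).
  rewrite H0, Rminus_0_r in Hc. exact Hc.
Qed.

Lemma f1_minus_1_vanishes : vanishes_at_0 (fun y => f1 y - 1).
Proof.
  intros e He. destruct Hode as [_ [Hf1 [_ H1]]].
  destruct (deriv_within_cont _ _ _ _ (Hf1 0 (Rle_refl 0)) e He) as [d [Hd Hc]].
  exists d. split; [exact Hd|]. intros y Hy.
  specialize (Hc y ltac:(unfold nonneg_half; lra) ltac:(rewrite Rminus_0_r, Rabs_pos_eq; lra)).
  rewrite H1 in Hc. exact Hc.
Qed.

Lemma f_pos_near_0 : exists c, 0 < c < eps /\ forall t, 0 < t <= c -> 0 < f t.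
Proof.
  destruct Hode as [Hf [_ [H0 H1]]].
  destruct (Hf 0 (Rle_refl 0) (1 / 2)) as [d [Hd Hq]]; [lra|].
  destruct (below_both d eps Hd Heps) as [c Hc].
  exists c. split; [lra|]. intros t Ht.
  assert (Ht0 : nonneg_half t) by (unfold nonneg_half; lra).
  specialize (Hq t Ht0 ltac:(lra) ltac:(rewrite Rminus_0_r, Rabs_pos_eq; lra)).
  rewrite H0, H1, !Rminus_0_r in Hq. apply Rabs_def2 in Hq as [Hq1 Hq2].
  replace (f t) with (f t / t * t) by (field; lra). nra.
Qed.

(* Where f > 0 the derivative f' is nondecreasing (f'' = -kappa f >= 0), hence >= 1. *)
Lemma f1_ge_1_upto z : z <= eps -> (forall t, 0 < t < z -> 0 < f t) ->
  forall t, 0 < t < z -> 1 <= f1 t.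
Proof.
  intros Hz Hpos t Ht.
  enough (0 <= f1 t - 1) by lra.
  apply (nonneg_of_nondecreasing_from_0 (fun y => f1 y - 1) (fun c => - kappa c * f c));
    [lra | | | exact f1_minus_1_vanishes].
  - intros c Hc. replace (- kappa c * f c) with (- kappa c * f c - 0) by ring.
    apply derivable_pt_lim_minus; [apply f1_deriv; lra | apply derivable_pt_lim_const].
  - intros c Hc. pose proof (Hkappa c ltac:(lra)). pose proof (Hpos c ltac:(lra)). nra.
Qed.

Lemma f_ge_id_upto z : (forall t, 0 < t < z -> 1 <= f1 t) ->
  forall t, 0 < t <= z -> t <= f t.
Proof.
  intros Hf1 t Ht.
  enough (0 <= f t - t) by lra.
  apply (nonneg_of_nondecreasing_from_0 (fun y => f y - y) (fun c => f1 c - 1)); [lra | | |].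
  - intros c Hc. apply derivable_pt_lim_minus; [apply f_deriv; lra | apply derivable_pt_lim_id].
  - intros c Hc. pose proof (Hf1 c ltac:(lra)). lra.
  - apply (vanishes_comb 1 (-1) f (fun y => y)); [intros y; ring | exact f_vanishes |
      exact vanishes_id].
Qed.

(* f has no zero in (0, eps): at a first zero z we would have f(z) >= z. *)
Lemma f_pos x : 0 < x < eps -> 0 < f x.
Proof.
  intros Hx. apply Rnot_le_lt. intros Hle.
  destruct (first_zero f f1 eps x (fun y Hy => f_deriv y (proj1 Hy)) f_pos_near_0 Hx Hle)
    as [z [Hz [Hfz Hpos]]].
  pose proof (f_ge_id_upto z (f1_ge_1_upto z ltac:(lra) Hpos) z ltac:(lra)). lra.
Qed.

Lemma f1_ge_1 x : 0 < x < eps -> 1 <= f1 x.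
Proof. apply f1_ge_1_upto; [lra | exact f_pos]. Qed.

Lemma f1_increasing x y : 0 < x -> x < y -> y < eps -> f1 x < f1 y.
Proof.
  intros Hx Hxy Hy. apply (increasing_of_deriv f1 (fun c => - kappa c * f c)); [exact Hxy | |].
  - intros c Hc. apply f1_deriv. lra.
  - intros c Hc. pose proof (Hkappa c ltac:(lra)). pose proof (f_pos c ltac:(lra)). nra.
Qed.

Lemma f_increasing x y : 0 < x -> x < y -> y < eps -> f x < f y.
Proof.
  intros Hx Hxy Hy. apply (increasing_of_deriv f f1); [exact Hxy | |].
  - intros c Hc. apply f_deriv. lra.
  - intros c Hc. pose proof (f1_ge_1 c ltac:(lra)). lra.
Qed.

Lemma f_monotone x y : 0 < x -> x <= y -> y < eps -> f x <= f y.
Proof.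
  intros Hx Hxy Hy. destruct (Req_dec x y) as [->|Hne]; [lra|].
  left. apply f_increasing; lra.
Qed.

(* Since f' is increasing, f(x) <= f'(y) x for x <= y. *)
Lemma f_le_linear x y : 0 < x -> x <= y -> y < eps -> f x <= f1 y * x.
Proof.
  intros Hx Hxy Hy. enough (0 <= f1 y * x - f x) by lra.
  apply (nonneg_of_nondecreasing_from_0 (fun z => f1 y * z - f z) (fun c => f1 y * 1 - f1 c));
    [exact Hx | | |].
  - intros c Hc. apply derivable_pt_lim_minus; [|apply f_deriv; lra].
    apply (derivable_pt_lim_scal id). apply derivable_pt_lim_id.
  - intros c Hc. pose proof (f1_increasing c y ltac:(lra) ltac:(lra) Hy). lra.
  - apply (vanishes_comb (f1 y) (-1) (fun z => z) f); [intros z; ring | exact vanishes_id |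
      exact f_vanishes].
Qed.

(* A cavitating equilibrium with r(1) = lam < eps, under the hypotheses of the
   theorem in the form in which they are used (phi' eventually positive is the
   consequence of (A6)); the section ends with the contradiction. *)
Section Equilibrium.

Variables (n : nat) (phi1 phi2 h1 h2 : R -> R) (lam V : R).
Variables (r r1 r2 : R -> R) (r0 : R).
Hypothesis Hn : (2 <= n)%nat.
Hypothesis Heps1 : eps <= 1.
Hypothesis Hlam : 0 < lam < eps.
Hypothesis Hphi1_deriv : forall v, 0 < v -> derivable_pt_lim phi1 v (phi2 v).
Hypothesis Hh1_deriv : forall v, 0 < v -> derivable_pt_lim h1 v (h2 v).
Hypothesis Hphi1_mono : forall u v, 0 < u -> u <= v -> phi1 u <= phi1 v.
Hypothesis Hh1_mono : forall u v, 0 < u -> u <= v -> h1 u <= h1 v.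
Hypothesis HA5 : forall u v, 0 < u -> u <= v -> u * phi1 u <= v * phi1 v.
Hypothesis HV : 0 < V.
Hypothesis Hphi1_pos : forall v, V <= v -> 0 < phi1 v.
Hypothesis Hi : phi1 1 + h1 1 = 0.
Hypothesis Hii : forall s, 1 < s -> phi1 s - h2 (s ^ n) * s ^ (2 * n - 1) < 0.
Hypothesis Heq : equilibrium n f f1 phi1 phi2 h2 lam r r1 r2 r0.
Hypothesis Hcav : cavitating n f phi1 h1 r r1 r0.

Lemma r0_pos : 0 < r0.
Proof. exact (proj1 Hcav). Qed.

Lemma r_deriv x : 0 < x < 1 -> derivable_pt_lim r x (r1 x).
Proof.
  intros Hx. destruct Heq as [Hr _].
  apply (deriv_within_interior unit_lopen r 0 1); [exact Hx | | apply Hr; lra].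
  intros y Hy. unfold unit_lopen. lra.
Qed.

Lemma r1_deriv x : 0 < x < 1 -> derivable_pt_lim r1 x (r2 x).
Proof. intros Hx. destruct Heq as [_ [_ [Hr1 _]]]. exact (Hr1 x Hx). Qed.

Lemma r1_pos x : 0 < x < 1 -> 0 < r1 x.
Proof. intros Hx. destruct Heq as [_ [_ [_ [Hpos _]]]]. apply Hpos. lra. Qed.

Lemma r_increasing x y : 0 < x -> x < y -> y < 1 -> r x < r y.
Proof.
  intros Hx Hxy Hy. apply (increasing_of_deriv r r1); [exact Hxy | |].
  - intros c Hc. apply r_deriv. lra.
  - intros c Hc. apply r1_pos. lra.
Qed.

Lemma r_ge_r0 x : 0 < x < 1 -> r0 <= r x.
Proof.
  intros Hx. apply Rnot_lt_le. intros Hlt. destruct Heq as [_ [_ [_ [_ [Hlim _]]]]].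
  destruct (Hlim (r0 - r x)) as [d [Hd Hc]]; [lra|].
  destruct (below_both d x Hd ltac:(lra)) as [a Ha].
  specialize (Hc a ltac:(lra)). apply Rabs_def2 in Hc.
  pose proof (r_increasing a x ltac:(lra) ltac:(lra) ltac:(lra)). lra.
Qed.

Lemma r_lt_lam x : 0 < x < 1 -> r x < lam.
Proof.
  intros Hx. destruct Heq as [Hr [_ [_ [_ [_ [_ [Hr1 _]]]]]]].
  set (m := (x + 1) / 2).
  assert (Hm : x < m < 1) by (unfold m; lra).
  pose proof (r_increasing x m ltac:(lra) ltac:(lra) ltac:(lra)).
  apply Rlt_le_trans with (r m); [assumption|]. apply Rnot_lt_le. intros Hlt.
  destruct (deriv_within_cont _ _ _ _ (Hr 1 ltac:(lra)) (r m - lam)) as [d [Hd Hc]]; [lra|].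
  pose proof (Rmax_l m (1 - d)). pose proof (Rmax_r m (1 - d)).
  assert (Rmax m (1 - d) < 1) by (apply Rmax_lub_lt; lra).
  set (y := (Rmax m (1 - d) + 1) / 2).
  specialize (Hc y ltac:(unfold unit_lopen, y; lra) ltac:(apply Rabs_def1; unfold y; lra)).
  rewrite Hr1 in Hc. apply Rabs_def2 in Hc.
  pose proof (r_increasing m y ltac:(lra) ltac:(unfold y; lra) ltac:(unfold y; lra)).
  lra.
Qed.

Lemma f_r0_pos : 0 < f r0.
Proof.
  pose proof r0_pos. pose proof (r_ge_r0 (1 / 2) ltac:(lra)).
  pose proof (r_lt_lam (1 / 2) ltac:(lra)). apply f_pos. lra.
Qed.

Lemma crossing_point :
  exists rs, 0 < rs <= lam /\ r rs = rs /\ forall t, 0 < t < rs -> t < r t.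
Proof.
  pose proof r0_pos as Hr0.
  assert (Hd : forall y, 0 < y < 1 -> derivable_pt_lim (fun t => r t - t) y (r1 y - 1)).
  { intros y Hy. apply derivable_pt_lim_minus; [apply r_deriv; exact Hy | apply derivable_pt_lim_id]. }
  assert (Hnear0 : exists c, 0 < c < 1 /\ forall t, 0 < t <= c -> 0 < r t - t).
  { destruct (below_both r0 1 Hr0 Rlt_0_1) as [c Hc].
    exists c. split; [lra|]. intros t Ht. pose proof (r_ge_r0 t ltac:(lra)). lra. }
  destruct (first_zero (fun t => r t - t) _ 1 lam Hd Hnear0 ltac:(lra)
              ltac:(cbv beta; pose proof (r_lt_lam lam ltac:(lra)); lra))
    as [z [Hz [Hrz Hpos]]].
  exists z. split; [exact Hz|]. split; [cbv beta in Hrz; lra|].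
  intros t Ht. specialize (Hpos t Ht). cbv beta in Hpos. lra.
Qed.

Lemma phi2_nonneg v : 0 < v -> 0 <= phi2 v.
Proof. intros Hv. exact (deriv_nonneg_of_nondecreasing phi1 v _ Hv Hphi1_mono (Hphi1_deriv v Hv)). Qed.

Lemma h2_nonneg v : 0 < v -> 0 <= h2 v.
Proof. intros Hv. exact (deriv_nonneg_of_nondecreasing h1 v _ Hv Hh1_mono (Hh1_deriv v Hv)). Qed.

Lemma exponent_pos : 0 < INR n - 1.
Proof. apply le_INR in Hn. simpl in Hn. lra. Qed.

Lemma A5_gap u v : 0 < u < v -> 0 < phi1 v -> u * phi1 u < v * phi1 v.
Proof.
  intros Huv Hv. destruct (Rle_or_lt (phi1 u) 0) as [Hu|Hu].
  - assert (u * phi1 u <= 0) by nra. nra.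
  - pose proof (Hphi1_mono u v ltac:(lra) ltac:(lra)). nra.
Qed.

Section Crossing.

Variable rs : R.
Hypothesis Hrs : 0 < rs <= lam.
Hypothesis Hrs_fix : r rs = rs.
Hypothesis Hrs_below : forall t, 0 < t < rs -> t < r t.

Lemma below_crossing x : 0 < x <= rs -> x <= r x /\ 0 < r x < eps.
Proof.
  intros Hx. pose proof r0_pos. pose proof (r_ge_r0 x ltac:(lra)).
  pose proof (r_lt_lam x ltac:(lra)). split; [|lra].
  destruct (Req_dec x rs) as [->|Hne]; [lra|]. pose proof (Hrs_below x ltac:(lra)). lra.
Qed.

Lemma f_values x : 0 < x <= rs -> 0 < f x /\ f x <= f (r x) /\ f r0 <= f (r x).
Proof.
  intros Hx. destruct (below_crossing x Hx) as [Hxr Hr]. pose proof r0_pos.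
  pose proof (r_ge_r0 x ltac:(lra)).
  split; [apply f_pos; lra|]. split; apply f_monotone; lra.
Qed.

Lemma tau_ge_1 x : 0 < x <= rs -> 1 <= tau f r x.
Proof.
  intros Hx. destruct (f_values x Hx) as [Hf [Hle _]]. unfold tau.
  apply (Rmult_le_reg_r (f x)); [exact Hf|].
  unfold Rdiv. rewrite Rmult_assoc, Rinv_l, Rmult_1_r, Rmult_1_l by lra. exact Hle.
Qed.

Lemma tau_gt_1 x : 0 < x < rs -> 1 < tau f r x.
Proof.
  intros Hx. destruct (f_values x ltac:(lra)) as [Hf _]. destruct (below_crossing x ltac:(lra)).
  pose proof (f_increasing x (r x) ltac:(lra) (Hrs_below x Hx) ltac:(lra)). unfold tau.
  apply (Rmult_lt_reg_r (f x)); [exact Hf|].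
  unfold Rdiv. rewrite Rmult_assoc, Rinv_l, Rmult_1_r, Rmult_1_l by lra. lra.
Qed.

Lemma tau_at_rs : tau f r rs = 1.
Proof.
  unfold tau. rewrite Hrs_fix. destruct (f_values rs ltac:(lra)) as [Hf _]. field. lra.
Qed.

Lemma tau_ge_hyperbola x c : 0 < x <= c -> c <= rs -> f r0 / (f1 c * x) <= tau f r x.
Proof.
  intros Hx Hc. destruct (f_values x ltac:(lra)) as [Hf [_ Hr0]].
  pose proof (f_le_linear x c ltac:(lra) ltac:(lra) ltac:(lra)) as Hlin.
  pose proof f_r0_pos.
  unfold tau. unfold Rdiv. apply Rle_trans with (f r0 * / f x).
  - apply Rmult_le_compat_l; [lra|]. apply Rinv_le_contravar; lra.
  - apply Rmult_le_compat_r; [left; apply Rinv_0_lt_compat|]; lra.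
Qed.

Lemma tau_large_near_0 : exists d, 0 < d /\ forall x, 0 < x < d -> x <= rs -> V <= tau f r x.
Proof.
  pose proof f_r0_pos as Hr0.
  destruct (f_vanishes (f r0 / V)) as [d [Hd Hsmall]]; [apply Rdiv_lt_0_compat; lra|].
  exists d. split; [exact Hd|]. intros x Hx Hxr.
  destruct (f_values x ltac:(lra)) as [Hf [_ Hfr]].
  specialize (Hsmall x Hx). rewrite Rabs_pos_eq in Hsmall by lra.
  apply (Rmult_lt_compat_l V) in Hsmall; [|exact HV].
  replace (V * (f r0 / V)) with (f r0) in Hsmall by (field; lra).
  unfold tau. apply (Rmult_le_reg_r (f x)); [exact Hf|].
  unfold Rdiv. rewrite Rmult_assoc, Rinv_l, Rmult_1_r by lra. lra.
Qed.

Definition dtau (x : R) : R := (f1 (r x) * r1 x - f1 x * tau f r x) / f x.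

Lemma tau_deriv_below x : 0 < x <= rs -> derivable_pt_lim (tau f r) x (dtau x).
Proof.
  intros Hx. destruct (below_crossing x Hx) as [_ Hr]. destruct (f_values x Hx) as [Hf _].
  apply tau_deriv; [apply f_deriv; lra | apply f_deriv; lra | apply r_deriv; lra | lra].
Qed.

Lemma ode_reduced x : 0 < x <= rs ->
  let t := tau f r x in let p := t ^ (n - 1) in
  f x * (phi2 (r1 x) + h2 (r1 x * p) * (p * p)) * r2 x =
    (INR n - 1) * (f1 (r x) * phi1 t - f1 x * phi1 (r1 x))
    - (INR n - 1) * (f1 (r x) * r1 x - f1 x * t) * h2 (r1 x * p) * r1 x * (p * p / t).
Proof.
  intros Hx t p. destruct Heq as [_ [_ [_ [_ [_ [_ [_ Hode_r]]]]]]].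
  specialize (Hode_r x ltac:(lra)). cbv zeta in Hode_r.
  pose proof (tau_ge_1 x Hx) as Ht.
  destruct (pow_exponents t n Hn ltac:(unfold t; lra)) as [E1 [E2 _]].
  fold t in Hode_r. rewrite E1, E2 in Hode_r. exact Hode_r.
Qed.

(* At a zero of w = r' - tau, hypothesis (ii) makes r'' < 0 while tau' > 0, so w
   crosses downwards. *)
Lemma w_downward x : 0 < x < rs -> r1 x = tau f r x -> r2 x - dtau x < 0.
Proof.
  intros Hx Hz. pose proof (ode_reduced x ltac:(lra)) as Ho. cbv zeta in Ho.
  pose proof (tau_gt_1 x Hx) as Ht. unfold dtau.
  set (t := tau f r x) in *. set (p := t ^ (n - 1)) in *.
  rewrite Hz in Ho |- *.
  destruct (f_values x ltac:(lra)) as [Hf _]. destruct (below_crossing x ltac:(lra)) as [_ Hr].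
  assert (Hf1 : f1 x < f1 (r x)) by (apply f1_increasing; [lra | apply Hrs_below | ]; lra).
  assert (Hp : 0 < p) by (apply pow_lt; lra).
  pose proof exponent_pos as Hk.
  pose proof (Hii t Ht) as Hstab.
  destruct (pow_exponents t n Hn ltac:(lra)) as [_ [_ [E3 E4]]].
  rewrite E3, E4 in Hstab. fold p in Hstab. replace (p * t) with (t * p) in Hstab by ring.
  replace ((INR n - 1) * (f1 (r x) * phi1 t - f1 x * phi1 t)
           - (INR n - 1) * (f1 (r x) * t - f1 x * t) * h2 (t * p) * t * (p * p / t))
    with (((INR n - 1) * (f1 (r x) - f1 x)) * (phi1 t - h2 (t * p) * (p * p * t))) in Ho
    by (field; lra).
  assert (Hrhs : ((INR n - 1) * (f1 (r x) - f1 x)) * (phi1 t - h2 (t * p) * (p * p * t)) < 0).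
  { assert (0 < (INR n - 1) * (f1 (r x) - f1 x)) by (apply Rmult_lt_0_compat; lra). nra. }
  assert (Hcoef : 0 <= f x * (phi2 t + h2 (t * p) * (p * p))).
  { pose proof (phi2_nonneg t ltac:(lra)). pose proof (h2_nonneg (t * p) ltac:(nra)).
    apply Rmult_le_pos; [lra|]. apply Rplus_le_le_0_compat; [lra|]. apply Rmult_le_pos; nra. }
  assert (Hr2 : r2 x < 0) by (apply Rnot_le_lt; intros Hr2; nra).
  assert (Hdt : 0 < (f1 (r x) * t - f1 x * t) / f x) by (apply Rdiv_lt_0_compat; nra).
  lra.
Qed.

(* w > 0 near 0 would give r' > tau >= c/rho, so r would be unbounded below. *)
Lemma w_not_pos_near_0 :
  ~ (exists c, 0 < c < rs /\ forall x, 0 < x <= c -> 0 < r1 x - tau f r x).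
Proof.
  intros [c [Hc Hpos]].
  pose proof (f1_ge_1 c ltac:(lra)) as Hf1c. pose proof f_r0_pos.
  apply (no_log_blowup r r1 (f r0 / f1 c) c r0); [lra | apply Rdiv_lt_0_compat; lra | | |].
  - intros x Hx. apply r_deriv. lra.
  - intros x Hx. specialize (Hpos x Hx).
    pose proof (tau_ge_hyperbola x c Hx ltac:(lra)).
    replace (f r0 / f1 c / x) with (f r0 / (f1 c * x)) by (field; lra). lra.
  - intros x Hx. apply r_ge_r0. lra.
Qed.

Lemma r1_lt_tau x : 0 < x < rs -> r1 x < tau f r x.
Proof.
  intros Hx.
  enough (r1 x - tau f r x < 0) by lra.
  apply (negative_of_downward_zeros (fun y => r1 y - tau f r y) (fun y => r2 y - dtau y) rs);
    [| | exact w_not_pos_near_0 | exact Hx].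
  - intros y Hy. apply derivable_pt_lim_minus;
      [apply r1_deriv; lra | apply tau_deriv_below; lra].
  - intros y Hy Hw. apply w_downward; [exact Hy | cbv beta in Hw; lra].
Qed.

(* The reduced energy sigma = T / tau^(2(n-1)), and the closed form of its
   derivative given by the key identity. *)
Definition sigma (y : R) : R :=
  phi1 (r1 y) / tau f r y ^ (n - 1) + h1 (r1 y * tau f r y ^ (n - 1)).

Definition dsigma (y : R) : R :=
  let t := tau f r y in
  (INR n - 1) * f1 (r y) * (t * phi1 t - r1 y * phi1 (r1 y)) / (f y * t ^ (n - 1) * t).

Lemma sigma_deriv x : 0 < x <= rs -> derivable_pt_lim sigma x (dsigma x).
Proof.
  intros Hx. pose proof (tau_ge_1 x Hx) as Ht. destruct (f_values x Hx) as [Hf _].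
  assert (Hr1 : 0 < r1 x) by (apply r1_pos; lra).
  assert (Hp : 0 < tau f r x ^ (n - 1)) by (apply pow_lt; lra).
  pose proof (reduced_T_deriv phi1 phi2 h1 h2 r1 r2 (tau f r) (n - 1) x (dtau x)
    (tau_deriv_below x Hx) (r1_deriv x ltac:(lra)) (Hphi1_deriv _ Hr1)
    (Hh1_deriv (r1 x * tau f r x ^ (n - 1)) ltac:(apply Rmult_lt_0_compat; lra))
    ltac:(lra)) as Hd.
  cbv zeta in Hd. rewrite minus_INR, INR_1 in Hd by lia.
  unfold sigma. match type of Hd with derivable_pt_lim _ _ ?l => replace (dsigma x) with l end;
    [exact Hd|].
  unfold dsigma, dtau. cbv zeta.
  apply reduced_T_deriv_identity; [lra | lra | lra | exact (ode_reduced x Hx)].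
Qed.

Lemma dsigma_sign x : 0 < x < rs ->
  0 <= dsigma x /\ (0 < phi1 (tau f r x) -> 0 < dsigma x).
Proof.
  intros Hx. unfold dsigma. cbv zeta.
  pose proof (tau_gt_1 x Hx) as Ht. pose proof (r1_lt_tau x Hx) as Hw.
  assert (Hr1 : 0 < r1 x) by (apply r1_pos; lra).
  destruct (f_values x ltac:(lra)) as [Hf _]. destruct (below_crossing x ltac:(lra)) as [_ Hr].
  pose proof (f1_ge_1 (r x) Hr) as Hf1. pose proof exponent_pos as Hk.
  set (t := tau f r x) in *.
  assert (Hden : 0 < f x * t ^ (n - 1) * t).
  { apply Rmult_lt_0_compat; [apply Rmult_lt_0_compat; [lra | apply pow_lt; lra] | lra]. }
  assert (Hcoef : 0 < (INR n - 1) * f1 (r x)) by (apply Rmult_lt_0_compat; lra).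
  split.
  - unfold Rdiv. apply Rmult_le_pos; [|left; apply Rinv_0_lt_compat; exact Hden].
    apply Rmult_le_pos; [lra|].
    pose proof (HA5 (r1 x) t Hr1 ltac:(lra)). lra.
  - intros Hphi. apply Rdiv_lt_0_compat; [|exact Hden]. apply Rmult_lt_0_compat; [lra|].
    pose proof (A5_gap (r1 x) t ltac:(lra) Hphi). lra.
Qed.

(* Cavitation (T -> 0) gives sigma -> 0 at 0, since tau >= 1. *)
Lemma sigma_vanishes : vanishes_at_0 sigma.
Proof.
  intros e He. destruct Hcav as [_ HT]. destruct (HT e He) as [d [Hd HTd]].
  destruct (below_both d rs Hd ltac:(lra)) as [d' Hd'].
  exists d'. split; [lra|]. intros y Hy.
  specialize (HTd y ltac:(lra)). unfold T_fun in HTd. cbv zeta in HTd. unfold sigma.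
  pose proof (tau_ge_1 y ltac:(lra)) as Ht.
  set (t := tau f r y) in *. set (p := t ^ (n - 1)) in *.
  assert (Hp : 1 <= p) by (apply pow_R1_Rle; exact Ht).
  replace (p * (phi1 (r1 y) + h1 (r1 y * p) * p))
    with (p * p * (phi1 (r1 y) / p + h1 (r1 y * p))) in HTd by (field; lra).
  rewrite Rabs_mult, (Rabs_pos_eq (p * p)) in HTd by nra.
  set (S := Rabs (phi1 (r1 y) / p + h1 (r1 y * p))) in *.
  assert (Hpp : 1 <= p * p) by nra.
  assert (S * 1 <= S * (p * p)) by (apply Rmult_le_compat_l; [apply Rabs_pos | exact Hpp]).
  lra.
Qed.

(* At rs, tau = 1 and r'(rs) <= 1, so (i) gives sigma(rs) <= 0. *)
Lemma sigma_at_rs_nonpos : sigma rs <= 0.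
Proof.
  assert (Hr1 : r1 rs <= 1).
  { enough (r1 rs - 1 <= 0) by lra.
    apply (deriv_nonpos_at_zero_from_left (fun y => r y - y) rs); [| cbv beta; lra | lra |].
    - apply derivable_pt_lim_minus; [apply r_deriv; lra | apply derivable_pt_lim_id].
    - intros y Hy. pose proof (Hrs_below y Hy). cbv beta. lra. }
  pose proof (r1_pos rs ltac:(lra)) as Hpos.
  unfold sigma. rewrite tau_at_rs, pow1, Rmult_1_r.
  unfold Rdiv. rewrite Rinv_1, Rmult_1_r.
  pose proof (Hphi1_mono (r1 rs) 1 Hpos Hr1). pose proof (Hh1_mono (r1 rs) 1 Hpos Hr1). lra.
Qed.

(* sigma starts at 0, increases strictly near 0 and ends nonpositive at rs. *)
Lemma crossing_contradiction : False.
Proof.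
  destruct tau_large_near_0 as [d [Hd Hlarge]].
  destruct (below_both d rs Hd ltac:(lra)) as [y Hy].
  assert (Hstart : 0 <= sigma (y / 2)).
  { apply (nonneg_of_nondecreasing_from_0 sigma dsigma); [lra | | | exact sigma_vanishes].
    - intros c Hc. apply sigma_deriv. lra.
    - intros c Hc. apply dsigma_sign. lra. }
  assert (Hincr : sigma (y / 2) < sigma y).
  { apply (increasing_of_deriv sigma dsigma); [lra | |].
    - intros c Hc. apply sigma_deriv. lra.
    - intros c Hc. apply dsigma_sign; [lra|]. apply Hphi1_pos.
      apply Hlarge; lra. }
  assert (Hrest : sigma y <= sigma rs).
  { apply (nondecreasing_of_deriv sigma dsigma); [lra | |].
    - intros c Hc. apply sigma_deriv. lra.
    - intros c Hc. apply dsigma_sign. lra. }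
  pose proof sigma_at_rs_nonpos. lra.
Qed.

End Crossing.

Lemma no_cavitating_equilibrium : False.
Proof.
  destruct crossing_point as [rs [Hrs [Hfix Hbelow]]].
  exact (crossing_contradiction rs Hrs Hfix Hbelow).
Qed.

End Equilibrium.

End NegativeCurvature.

Theorem theorem4p5
  (n : nat) (kappa f f1 phi phi1 phi2 h h1 h2 : R -> R) (eps : R) :
  (2 <= n)%nat ->
  (forall x, 0 <= x -> cont_within nonneg_half kappa x) ->
  ode_solution kappa f f1 ->
  mu_plus_le kappa 1 1 ->
  0 < eps <= 1 ->
  (forall s, 0 < s < eps -> kappa s < 0) ->
  (* (A1) *)
  C2_pos h h1 h2 -> strictly_convex_pos h ->
  (* (A2) *)
  (forall M, exists d, 0 < d /\ forall v, 0 < v < d -> M < h v) ->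
  (forall M, exists V, forall v, V < v -> M < h v / v) ->
  (* (A4) *)
  (forall v, 0 < v -> 0 < phi v) -> C2_pos phi phi1 phi2 -> convex_pos phi ->
  (* (A5) *)
  (forall u v, 0 < u -> u <= v -> u * phi1 u <= v * phi1 v) ->
  (* (A6) *)
  A6 phi1 ->
  (* (A7) *)
  (exists d0 d1, 0 < d0 /\ 0 < d1 /\
     forall s v, 0 < v -> 0 < s -> Rabs (s - 1) < d0 ->
       Rabs (phi1 (s * v)) <= d1 * phi v / v) ->
  (* (A8) *)
  (exists d2 alpha beta, 0 < d2 /\ 0 < alpha < INR n /\
     0 <= beta < 1 + 1 / (INR n - 1) /\
     forall v, 0 < v -> phi v <= d2 * (1 + Rpower v alpha + Rpower v (- beta))) ->
  (* (i) *)
  phi1 1 + h1 1 = 0 ->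
  (* (ii) *)
  (forall s, 1 < s -> phi1 s - h2 (s ^ n) * s ^ (2 * n - 1) < 0) ->
  forall lam, 0 < lam < eps ->
    ~ (exists (r r1 r2 : R -> R) (r0 : R),
         equilibrium n f f1 phi1 phi2 h2 lam r r1 r2 r0 /\
         cavitating n f phi1 h1 r r1 r0).
Proof.
  intros Hn _ Hode _ [Heps0 Heps1] Hkappa Hh Hh_sconv _ _ _ Hphi Hphi_conv HA5 HA6 _ _ Hi Hii
    lam Hlam [r [r1 [r2 [r0 [Heq Hcav]]]]].
  destruct Hphi as [Hphi_deriv [Hphi1_deriv _]]. destruct Hh as [Hh_deriv [Hh1_deriv _]].
  pose proof (convex_deriv_nondecreasing phi phi1 Hphi_conv Hphi_deriv) as Hphi1_mono.
  pose proof (convex_deriv_nondecreasing h h1 (strictly_convex_convex h Hh_sconv) Hh_deriv)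
    as Hh1_mono.
  destruct (A6_eventually_pos phi1 Hphi1_mono HA6) as [V [HV Hphi1_pos]].
  exact (no_cavitating_equilibrium kappa f f1 eps Hode Heps0 Hkappa n phi1 phi2 h1 h2 lam V
           r r1 r2 r0 Hn Heps1 Hlam Hphi1_deriv Hh1_deriv Hphi1_mono Hh1_mono HA5 HV Hphi1_pos
           Hi Hii Heq Hcav).
Qed.
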